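(* Let $f=(f_1,f_2):\mathbb{R}^2\to\mathbb{R}^2$ be a smooth one-generic mapping having a cusp point at the origin with $f(\mathbf{0})=\mathbf{0}$, and suppose that $\frac{\partial f_1}{\partial x}(\mathbf{0})=\frac{\partial f_2}{\partial x}(\mathbf{0})=\frac{\partial f_2}{\partial y}(\mathbf{0})=0$, $\frac{\partial f_1}{\partial y}(\mathbf{0})\ne0$, $\frac{\partial J}{\partial x}(\mathbf{0})=0$, $\frac{\partial J}{\partial y}(\mathbf{0})\ne0$. Let $\varphi:(\mathbb{R},0)\to(\mathbb{R},0)$ be the smooth germ with $J(t,\varphi(t))\equiv0$, and set $$v_1=\frac{d^2}{dt^2}\begin{bmatrix}f_1(t,\varphi(t))\\ f_2(t,\varphi(t))\end{bmatrix}\Big|_{t=0},\qquad v_2=Df(\mathbf{0})\cdot\begin{bmatrix}\frac{\partial J}{\partial x}(\mathbf{0})\\ \frac{\partial J}{\partial y}(\mathbf{0})\end{bmatrix}.$$ Then (i) $\det DF(\mathbf{0})\ne0$; (ii) the (nonzero) vectors $v_1$ and $v_2$ point in the same direction if and only if $\det DF(\mathbf{0})<0$, and in opposite directions if and only if $\det DF(\mathbf{0})>0$.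
   Context: $J=\det Df$ and $F=Df\cdot(-\partial J/\partial y,\ \partial J/\partial x)^T$. $f$ is one-generic if $dJ\ne0$ on $J^{-1}(0)$ (equivalently, $j^1f$ is transverse to the corank strata). A point $p\in S_1(f)=J^{-1}(0)$ with $T_pS_1(f)=\ker Df(p)$ is a cusp point if it is a simple zero of $dJ(\xi)$ on $S_1(f)$, $\xi$ a nonvanishing vector field along $S_1(f)$ in $\ker Df$. *)

From Stdlib Require Import Reals.
From Coquelicot Require Import Coquelicot.
Open Scope R_scope.

Definition dx (g : R -> R -> R) : R -> R -> R :=
  fun x y => Derive (fun t => g t y) x.
Definition dy (g : R -> R -> R) : R -> R -> R :=
  fun x y => Derive (fun t => g x t) y.

Fixpoint Ck (k : nat) (g : R -> R -> R) : Prop :=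
  (forall x y, continuous (fun p : R * R => g (fst p) (snd p)) (x, y)) /\
  match k with
  | O => True
  | S k' => (forall x y, ex_derive (fun t => g t y) x) /\
            (forall x y, ex_derive (fun t => g x t) y) /\
            Ck k' (dx g) /\ Ck k' (dy g)
  end.

Definition smooth2 (g : R -> R -> R) : Prop := forall k, Ck k g.

Definition smooth_on1 (g : R -> R) (eps : R) : Prop :=
  forall (n : nat) (t : R), Rabs t < eps -> ex_derive_n g n t.

Definition Jac (f1 f2 : R -> R -> R) : R -> R -> R :=
  fun x y => dx f1 x y * dy f2 x y - dy f1 x y * dx f2 x y.

Definition Dfapp (f1 f2 : R -> R -> R) (x y v1 v2 : R) : R * R :=
  (dx f1 x y * v1 + dy f1 x y * v2, dx f2 x y * v1 + dy f2 x y * v2).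

Definition Fmap1 (f1 f2 : R -> R -> R) : R -> R -> R :=
  fun x y => fst (Dfapp f1 f2 x y (- dy (Jac f1 f2) x y) (dx (Jac f1 f2) x y)).
Definition Fmap2 (f1 f2 : R -> R -> R) : R -> R -> R :=
  fun x y => snd (Dfapp f1 f2 x y (- dy (Jac f1 f2) x y) (dx (Jac f1 f2) x y)).

Definition detDF (f1 f2 : R -> R -> R) (x y : R) : R :=
  dx (Fmap1 f1 f2) x y * dy (Fmap2 f1 f2) x y
  - dy (Fmap1 f1 f2) x y * dx (Fmap2 f1 f2) x y.

Definition one_generic (f1 f2 : R -> R -> R) : Prop :=
  forall x y, Jac f1 f2 x y = 0 ->
    (dx (Jac f1 f2) x y, dy (Jac f1 f2) x y) <> (0, 0).

(* p = (p1,p2) is a cusp point: p in S_1(f) = J^{-1}(0); there is a smooth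
   regular curve gamma = (g1,g2) in S_1(f) through p (a local parametrization of
   S_1(f) near p), with T_p S_1(f) = span gamma'(0) = ker Df(p), and a smooth
   nonvanishing vector field xi = (k1,k2) along gamma lying in ker Df, such that
   t |-> dJ_{gamma(t)}(xi(t)) has a simple zero at t = 0. *)
Definition cusp_point (f1 f2 : R -> R -> R) (p1 p2 : R) : Prop :=
  Jac f1 f2 p1 p2 = 0 /\
  exists (eps : R) (g1 g2 k1 k2 : R -> R),
    0 < eps /\
    smooth_on1 g1 eps /\ smooth_on1 g2 eps /\
    smooth_on1 k1 eps /\ smooth_on1 k2 eps /\
    g1 0 = p1 /\ g2 0 = p2 /\
    (forall t, Rabs t < eps ->
        Jac f1 f2 (g1 t) (g2 t) = 0 /\
        (Derive g1 t, Derive g2 t) <> (0, 0) /\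
        (k1 t, k2 t) <> (0, 0) /\
        Dfapp f1 f2 (g1 t) (g2 t) (k1 t) (k2 t) = (0, 0)) /\
    (forall v1 v2, Dfapp f1 f2 p1 p2 v1 v2 = (0, 0) <->
        exists c, v1 = c * Derive g1 0 /\ v2 = c * Derive g2 0) /\
    (let h := fun t => dx (Jac f1 f2) (g1 t) (g2 t) * k1 t
                       + dy (Jac f1 f2) (g1 t) (g2 t) * k2 t in
     h 0 = 0 /\ Derive h 0 <> 0).

(* At the origin [Df = [[0, a], [0, 0]]] with [a = f1_y], and all claims are governed by the
   single number [K = a J_xx - b f1_xx], [b = J_y].  Expanding [J_x = 0] and [J_y] at the origin
   gives [f2_xx = 0] and [b = - a f2_xy], whence [a det DF(0) = K b^2].  Differentiating
   [J(t, phi t) = 0] twice gives [phi'(0) = 0] and [J_xx + b phi''(0) = 0], so [b v1 = (-K, 0)],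
   while [v2 = (a b, 0)].  The cusp condition says exactly [K <> 0]: along [S_1(f)], tangent to
   [ker Df(0) = R (1,0)] at the origin, differentiating the first row of [Df xi = 0] and
   [dJ(xi)] gives [a (dJ(xi))'(0) = K gamma_1'(0) xi_1(0)].  Hence
   [det DF(0) <v1, v2> = - K^2 b^2 < 0]. *)

From Stdlib Require Import Reals Lra Psatz FunctionalExtensionality.
From Coquelicot Require Import Coquelicot.
Open Scope R_scope.

Lemma Ck_continuous k g :
  Ck k g -> forall x y, continuous (fun p : R * R => g (fst p) (snd p)) (x, y).
Proof. destruct k; simpl; tauto. Qed.

Lemma Ck_ex_dx k g : Ck (S k) g -> forall x y, ex_derive (fun t => g t y) x.
Proof. simpl; tauto. Qed.

Lemma Ck_ex_dy k g : Ck (S k) g -> forall x y, ex_derive (fun t => g x t) y.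
Proof. simpl; tauto. Qed.

Lemma Ck_dx k g : Ck (S k) g -> Ck k (dx g).
Proof. simpl; tauto. Qed.

Lemma Ck_dy k g : Ck (S k) g -> Ck k (dy g).
Proof. simpl; tauto. Qed.

Lemma Ck_S k : forall g, Ck (S k) g -> Ck k g.
Proof.
  induction k as [|k IH]; intros g (Hc & Hx & Hy & Hdx & Hdy).
  - split; [exact Hc | exact I].
  - repeat split; auto.
Qed.

Lemma Ck_le k m g : (m <= k)%nat -> Ck k g -> Ck m g.
Proof. induction 1; auto using Ck_S. Qed.

Lemma Ck_plus k : forall g h, Ck k g -> Ck k h -> Ck k (fun u v => g u v + h u v).
Proof.
  induction k as [|k IH]; intros g h Hg Hh; split;
    try (intros x y; apply (continuous_plus (fun p : R * R => g (fst p) (snd p))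
                              (fun p : R * R => h (fst p) (snd p)));
         eapply Ck_continuous; eauto).
  - exact I.
  - repeat split.
    + intros x y; apply (ex_derive_plus (fun t => g t y) (fun t => h t y));
        eapply Ck_ex_dx; eauto.
    + intros x y; apply (ex_derive_plus (fun t => g x t) (fun t => h x t));
        eapply Ck_ex_dy; eauto.
    + replace (dx (fun u v => g u v + h u v)) with (fun u v => dx g u v + dx h u v).
      * apply IH; eapply Ck_dx; eauto.
      * do 2 (apply functional_extensionality; intro); symmetry.
        apply Derive_plus; eapply Ck_ex_dx; eauto.
    + replace (dy (fun u v => g u v + h u v)) with (fun u v => dy g u v + dy h u v).
      * apply IH; eapply Ck_dy; eauto.
      * do 2 (apply functional_extensionality; intro); symmetry.
        apply Derive_plus; eapply Ck_ex_dy; eauto.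
Qed.

Lemma Ck_opp k : forall g, Ck k g -> Ck k (fun u v => - g u v).
Proof.
  induction k as [|k IH]; intros g Hg; split;
    try (intros x y; apply (continuous_opp (fun p : R * R => g (fst p) (snd p)));
         eapply Ck_continuous; eauto).
  - exact I.
  - repeat split.
    + intros x y; apply (ex_derive_opp (fun t => g t y)); eapply Ck_ex_dx; eauto.
    + intros x y; apply (ex_derive_opp (fun t => g x t)); eapply Ck_ex_dy; eauto.
    + replace (dx (fun u v => - g u v)) with (fun u v => - dx g u v).
      * apply IH; eapply Ck_dx; eauto.
      * do 2 (apply functional_extensionality; intro); symmetry; apply Derive_opp.
    + replace (dy (fun u v => - g u v)) with (fun u v => - dy g u v).
      * apply IH; eapply Ck_dy; eauto.
      * do 2 (apply functional_extensionality; intro); symmetry; apply Derive_opp.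
Qed.

Lemma Ck_mult k : forall g h, Ck k g -> Ck k h -> Ck k (fun u v => g u v * h u v).
Proof.
  induction k as [|k IH]; intros g h Hg Hh; split;
    try (intros x y; apply (continuous_mult (fun p : R * R => g (fst p) (snd p))
                              (fun p : R * R => h (fst p) (snd p)));
         eapply Ck_continuous; eauto).
  - exact I.
  - repeat split.
    + intros x y; apply (ex_derive_mult (fun t => g t y) (fun t => h t y));
        eapply Ck_ex_dx; eauto.
    + intros x y; apply (ex_derive_mult (fun t => g x t) (fun t => h x t));
        eapply Ck_ex_dy; eauto.
    + replace (dx (fun u v => g u v * h u v))
        with (fun u v => dx g u v * h u v + g u v * dx h u v).
      * apply Ck_plus; apply IH; eauto using Ck_dx, Ck_S.
      * do 2 (apply functional_extensionality; intro); symmetry.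
        apply Derive_mult; eapply Ck_ex_dx; eauto.
    + replace (dy (fun u v => g u v * h u v))
        with (fun u v => dy g u v * h u v + g u v * dy h u v).
      * apply Ck_plus; apply IH; eauto using Ck_dy, Ck_S.
      * do 2 (apply functional_extensionality; intro); symmetry.
        apply Derive_mult; eapply Ck_ex_dy; eauto.
Qed.

Lemma Ck_Jac k f1 f2 : Ck (S k) f1 -> Ck (S k) f2 -> Ck k (Jac f1 f2).
Proof.
  intros H1 H2; unfold Jac, Rminus.
  apply (Ck_plus k (fun u v => dx f1 u v * dy f2 u v));
    [|apply (Ck_opp k (fun u v => dy f1 u v * dx f2 u v))];
    apply Ck_mult; eauto using Ck_dx, Ck_dy.
Qed.

Lemma Ck_ex_diff_n k : forall g, Ck k g -> forall x y, ex_diff_n g k x y.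
Proof.
  induction k as [|k IH]; intros g Hg x y;
    (split; [apply continuity_2d_pt_filterlim, (Ck_continuous _ g Hg) |]).
  - exact I.
  - repeat split; eauto using Ck_ex_dx, Ck_ex_dy, Ck_dx, Ck_dy.
Qed.

Lemma DL_pol_1 g x y u v : DL_pol 1 g x y u v = g x y + dx g x y * u + dy g x y * v.
Proof.
  unfold DL_pol, differential, partial_derive, dx, dy; simpl.
  unfold Binomial.C; simpl; field.
Qed.

(* Taylor-Lagrange at order 1: the remainder is O(|h|^2), hence o(|h|). *)
Lemma Ck2_differentiable g x y :
  Ck 2 g -> differentiable_pt_lim g x y (dx g x y) (dy g x y).
Proof.
  intros Hg.
  assert (Hl : locally_2d (fun u v => ex_diff_n g 2 u v) x y)
    by (exists (mkposreal 1 Rlt_0_1); intros; apply Ck_ex_diff_n, Hg).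
  destruct (Taylor_Lagrange_2d g 1 x y Hl) as [D [d Hd]].
  intros e.
  set (C := Rabs D + 1).
  assert (HC : 0 < C) by (pose proof (Rabs_pos D); unfold C; lra).
  assert (He : 0 < e / C) by (apply Rdiv_lt_0_compat; [apply cond_pos | exact HC]).
  exists (mkposreal _ (Rmin_pos _ _ (cond_pos d) He)); simpl; intros u v Hu Hv.
  pose proof (Rmin_l d (e / C)); pose proof (Rmin_r d (e / C)).
  specialize (Hd u v ltac:(lra) ltac:(lra)); rewrite DL_pol_1 in Hd.
  set (M := Rmax (Rabs (u - x)) (Rabs (v - y))) in *.
  assert (HM0 : 0 <= M) by (apply Rle_trans with (Rabs (u - x)); [apply Rabs_pos | apply Rmax_l]).
  assert (HCM : C * M <= e).
  { assert (HM : M < e / C) by (apply Rmax_lub_lt; lra).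
    apply Rmult_lt_compat_l with (r := C) in HM; [| exact HC].
    unfold Rdiv in HM; rewrite <- Rmult_assoc, Rinv_r_simpl_m in HM; lra. }
  assert (HD : D <= C - 1) by (pose proof (Rle_abs D); unfold C; lra).
  replace (g u v - g x y - (dx g x y * (u - x) + dy g x y * (v - y)))
    with (g u v - (g x y + dx g x y * (u - x) + dy g x y * (v - y))) by ring.
  eapply Rle_trans; [exact Hd |]; nra.
Qed.

Lemma is_derive_comp_2d g u v t u' v' :
  Ck 2 g -> is_derive u t u' -> is_derive v t v' ->
  is_derive (fun s => g (u s) (v s)) t (dx g (u t) (v t) * u' + dy g (u t) (v t) * v').
Proof.
  intros Hg Hu Hv; apply is_derive_Reals.
  apply derivable_pt_lim_comp_2d; [apply Ck2_differentiable, Hg | |];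
    apply is_derive_Reals; assumption.
Qed.

Definition dirder (g : R -> R -> R) (x y w1 w2 : R) : R :=
  dx g x y * w1 + dy g x y * w2.

(* The second-order term [D^2 g (u, w)] of [d/dt (Dg . w)]; no symmetry of mixed partials is used. *)
Definition hessian_app (g : R -> R -> R) (x y u1 u2 w1 w2 : R) : R :=
  dirder (dx g) x y u1 u2 * w1 + dirder (dy g) x y u1 u2 * w2.

Lemma is_derive_eq (f : R -> R) x l l' : is_derive f x l -> l = l' -> is_derive f x l'.
Proof. intros H <-; exact H. Qed.

Lemma is_derive_Rmult (f g : R -> R) x df dg :
  is_derive f x df -> is_derive g x dg ->
  is_derive (fun t => f t * g t) x (df * g x + f x * dg).
Proof. intros Hf Hg; apply (is_derive_mult f g); auto; intros; apply Rmult_comm. Qed.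

Lemma is_derive_dirder g (u v w1 w2 : R -> R) (t u' v' w1' w2' : R) :
  Ck 3 g -> is_derive u t u' -> is_derive v t v' ->
  is_derive w1 t w1' -> is_derive w2 t w2' ->
  is_derive (fun s => dirder g (u s) (v s) (w1 s) (w2 s)) t
    (hessian_app g (u t) (v t) u' v' (w1 t) (w2 t) + dirder g (u t) (v t) w1' w2').
Proof.
  intros Hg Hu Hv Hw1 Hw2.
  eapply is_derive_eq.
  - apply (is_derive_plus (fun s => dx g (u s) (v s) * w1 s) (fun s => dy g (u s) (v s) * w2 s)).
    + apply is_derive_Rmult; [| exact Hw1].
      apply is_derive_comp_2d; [apply Ck_dx, Hg | exact Hu | exact Hv].
    + apply is_derive_Rmult; [| exact Hw2].
      apply is_derive_comp_2d; [apply Ck_dy, Hg | exact Hu | exact Hv].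
  - unfold hessian_app, dirder, plus; simpl; ring.
Qed.

Lemma is_derive_dx g x y : Ck 1 g -> is_derive (fun t => g t y) x (dx g x y).
Proof. intros Hg; apply Derive_correct; eapply Ck_ex_dx; eauto. Qed.

Lemma is_derive_dy g x y : Ck 1 g -> is_derive (fun t => g x t) y (dy g x y).
Proof. intros Hg; apply Derive_correct; eapply Ck_ex_dy; eauto. Qed.

Lemma dx_dirder g (w1 w2 : R -> R -> R) (x y w1x w2x : R) :
  Ck 3 g -> is_derive (fun t => w1 t y) x w1x -> is_derive (fun t => w2 t y) x w2x ->
  dx (fun u v => dirder g u v (w1 u v) (w2 u v)) x y =
  hessian_app g x y 1 0 (w1 x y) (w2 x y) + dirder g x y w1x w2x.
Proof.
  intros Hg H1 H2; apply is_derive_unique.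
  apply (is_derive_dirder g (fun t => t) (fun _ => y) (fun t => w1 t y) (fun t => w2 t y) x 1 0);
    [exact Hg | | | exact H1 | exact H2].
  - apply (is_derive_id (K := R_AbsRing)).
  - apply (is_derive_const (K := R_AbsRing) (V := R_NormedModule)).
Qed.

Lemma dy_dirder g (w1 w2 : R -> R -> R) (x y w1y w2y : R) :
  Ck 3 g -> is_derive (fun t => w1 x t) y w1y -> is_derive (fun t => w2 x t) y w2y ->
  dy (fun u v => dirder g u v (w1 u v) (w2 u v)) x y =
  hessian_app g x y 0 1 (w1 x y) (w2 x y) + dirder g x y w1y w2y.
Proof.
  intros Hg H1 H2; apply is_derive_unique.
  apply (is_derive_dirder g (fun _ => x) (fun t => t) (fun t => w1 x t) (fun t => w2 x t) y 0 1);
    [exact Hg | | | exact H1 | exact H2].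
  - apply (is_derive_const (K := R_AbsRing) (V := R_NormedModule)).
  - apply (is_derive_id (K := R_AbsRing)).
Qed.

Lemma locally_Rabs_lt x e : Rabs x < e -> locally x (fun s => Rabs s < e).
Proof.
  intros Hx; assert (He : 0 < e - Rabs x) by lra.
  exists (mkposreal _ He); intros s Hs; change (Rabs (s - x) < e - Rabs x) in Hs.
  pose proof (Rabs_triang_inv s x); lra.
Qed.

Lemma Derive_n_locally_zero (F : R -> R) n t :
  locally t (fun s => F s = 0) -> Derive_n F (S n) t = 0.
Proof.
  intros HF; rewrite (Derive_n_ext_loc F (fun _ => 0)); [apply Derive_n_const | exact HF].
Qed.

Lemma smooth_on1_is_derive g e t :
  smooth_on1 g e -> Rabs t < e -> is_derive g t (Derive g t).
Proof. intros Hg Ht; apply Derive_correct, (Hg 1%nat t Ht). Qed.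

Lemma smooth_on1_is_derive2 g e t :
  smooth_on1 g e -> Rabs t < e -> is_derive (Derive g) t (Derive (Derive g) t).
Proof. intros Hg Ht; apply Derive_correct, (Hg 2%nat t Ht). Qed.

Lemma Derive_graph g (phi : R -> R) (eps t : R) :
  Ck 2 g -> smooth_on1 phi eps -> Rabs t < eps ->
  Derive (fun s => g s (phi s)) t = dirder g t (phi t) 1 (Derive phi t).
Proof.
  intros Hg Hphi Ht; apply is_derive_unique.
  apply (is_derive_comp_2d g (fun s => s) phi); [exact Hg | |].
  - apply (is_derive_id (K := R_AbsRing)).
  - eapply smooth_on1_is_derive; eauto.
Qed.

Lemma Derive2_graph g (phi : R -> R) (eps t : R) :
  Ck 3 g -> smooth_on1 phi eps -> Rabs t < eps ->
  Derive_n (fun s => g s (phi s)) 2 t =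
  hessian_app g t (phi t) 1 (Derive phi t) 1 (Derive phi t)
  + dirder g t (phi t) 0 (Derive (Derive phi) t).
Proof.
  intros Hg Hphi Ht; simpl.
  rewrite (Derive_ext_loc _ (fun s => dirder g s (phi s) 1 (Derive phi s))).
  - apply is_derive_unique.
    apply (is_derive_dirder g (fun s => s) phi (fun _ => 1) (Derive phi)); [exact Hg | | | |].
    + apply (is_derive_id (K := R_AbsRing)).
    + eapply smooth_on1_is_derive; eauto.
    + apply (is_derive_const (K := R_AbsRing) (V := R_NormedModule)).
    + eapply smooth_on1_is_derive2; eauto.
  - eapply filter_imp; [| apply (locally_Rabs_lt t eps Ht)].
    intros s Hs; apply (Derive_graph g phi eps s); [apply (Ck_le 3); auto | exact Hphi | exact Hs].
Qed.

Lemma horizontal_directions (x1 x2 D : R) :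
  x1 * x2 * D < 0 ->
  D <> 0 /\ (x1, 0) <> (0, 0) /\ (x2, 0) <> (0, 0) /\
  ((exists c, 0 < c /\ x1 = c * x2 /\ 0 = c * 0) <-> D < 0) /\
  ((exists c, c < 0 /\ x1 = c * x2 /\ 0 = c * 0) <-> D > 0).
Proof.
  intros H.
  assert (Hx1 : x1 <> 0) by (intros ->; lra).
  assert (Hx2 : x2 <> 0) by (intros ->; lra).
  assert (Hsq : 0 < x2 * x2) by (apply Rsqr_pos_lt, Hx2).
  assert (Hscale : forall c, x1 = c * x2 -> x1 * x2 = c * (x2 * x2)) by (intros c ->; ring).
  assert (Hratio : x1 = x1 / x2 * x2) by (field; exact Hx2).
  pose proof (Hscale _ Hratio) as Hprod.
  repeat split.
  - intros ->; lra.
  - intros E; injection E as E; exact (Hx1 E).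
  - intros E; injection E as E; exact (Hx2 E).
  - intros (c & Hc & Hc1 & _).
    assert (0 < x1 * x2) by (rewrite (Hscale c Hc1); apply Rmult_lt_0_compat; lra); nra.
  - intros HD; assert (0 < x1 * x2) by nra.
    exists (x1 / x2); repeat split; [nra | exact Hratio | ring].
  - intros (c & Hc & Hc1 & _).
    assert (x1 * x2 < 0) by (rewrite (Hscale c Hc1); nra); nra.
  - intros HD; assert (x1 * x2 < 0) by nra.
    exists (x1 / x2); repeat split; [nra | exact Hratio | ring].
Qed.

Definition cusp_coefficient (f1 f2 : R -> R -> R) : R :=
  dy f1 0 0 * dx (dx (Jac f1 f2)) 0 0 - dy (Jac f1 f2) 0 0 * dx (dx f1) 0 0.

Section Origin.

Variables f1 f2 : R -> R -> R.

Local Notation J := (Jac f1 f2).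
Local Notation a := (dy f1 0 0).
Local Notation b := (dy (Jac f1 f2) 0 0).
Local Notation K := (cusp_coefficient f1 f2).

Hypothesis f1_C4 : Ck 4 f1.
Hypothesis f2_C4 : Ck 4 f2.
Hypothesis f1_dx0 : dx f1 0 0 = 0.
Hypothesis f2_dx0 : dx f2 0 0 = 0.
Hypothesis f2_dy0 : dy f2 0 0 = 0.
Hypothesis f1_dy0 : a <> 0.
Hypothesis Jac_dx0 : dx J 0 0 = 0.
Hypothesis Jac_dy0 : b <> 0.

Lemma Jac_C3 : Ck 3 J.
Proof. apply Ck_Jac; assumption. Qed.

Lemma Jac_partials_origin : dx J 0 0 = - a * dx (dx f2) 0 0 /\ b = - a * dy (dx f2) 0 0.
Proof.
  assert (HJ : J = fun u v => dirder f1 u v (dy f2 u v) (- dx f2 u v)).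
  { do 2 (apply functional_extensionality; intro); unfold Jac, dirder; ring. }
  assert (f2_C2 : Ck 2 f2) by (apply (Ck_le 4); auto).
  assert (f1_C3 : Ck 3 f1) by (apply Ck_S; exact f1_C4).
  rewrite HJ; split.
  - rewrite (dx_dirder f1 _ _ 0 0 (dx (dy f2) 0 0) (- dx (dx f2) 0 0)).
    + unfold hessian_app, dirder; rewrite f1_dx0, f2_dx0, f2_dy0; ring.
    + exact f1_C3.
    + apply is_derive_dx, Ck_dy, f2_C2.
    + apply (is_derive_opp (fun t => dx f2 t 0)), is_derive_dx, Ck_dx, f2_C2.
  - rewrite (dy_dirder f1 _ _ 0 0 (dy (dy f2) 0 0) (- dy (dx f2) 0 0)).
    + unfold hessian_app, dirder; rewrite f1_dx0, f2_dx0, f2_dy0; ring.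
    + exact f1_C3.
    + apply is_derive_dy, Ck_dy, f2_C2.
    + apply (is_derive_opp (fun t => dx f2 0 t)), is_derive_dy, Ck_dx, f2_C2.
Qed.

Lemma f2_dxdx_origin : dx (dx f2) 0 0 = 0.
Proof.
  destruct Jac_partials_origin as [H _]; rewrite Jac_dx0 in H.
  apply (Rmult_eq_reg_l a); [lra | exact f1_dy0].
Qed.

Lemma f2_dydx_origin : a * dy (dx f2) 0 0 = - b.
Proof. destruct Jac_partials_origin as [_ H]; lra. Qed.

Lemma detDF_origin : a * detDF f1 f2 0 0 = K * b ^ 2.
Proof.
  assert (f1_C3 : Ck 3 f1) by (apply Ck_S; exact f1_C4).
  assert (f2_C3 : Ck 3 f2) by (apply Ck_S; exact f2_C4).
  assert (Jx_C1 : Ck 1 (dx J)) by (apply (Ck_le 2), Ck_dx, Jac_C3; auto).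
  assert (Jy_C1 : Ck 1 (dy J)) by (apply (Ck_le 2), Ck_dy, Jac_C3; auto).
  assert (F1x : dx (Fmap1 f1 f2) 0 0 = K).
  { change (Fmap1 f1 f2) with (fun u v => dirder f1 u v (- dy J u v) (dx J u v)).
    rewrite (dx_dirder f1 _ _ 0 0 (- dx (dy J) 0 0) (dx (dx J) 0 0)).
    - unfold hessian_app, dirder, cusp_coefficient; rewrite f1_dx0, Jac_dx0; ring.
    - exact f1_C3.
    - apply (is_derive_opp (fun t => dy J t 0)), is_derive_dx, Jy_C1.
    - apply is_derive_dx, Jx_C1. }
  assert (F2x : dx (Fmap2 f1 f2) 0 0 = 0).
  { change (Fmap2 f1 f2) with (fun u v => dirder f2 u v (- dy J u v) (dx J u v)).
    rewrite (dx_dirder f2 _ _ 0 0 (- dx (dy J) 0 0) (dx (dx J) 0 0)).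
    - unfold hessian_app, dirder; rewrite f2_dx0, f2_dy0, Jac_dx0, f2_dxdx_origin; ring.
    - exact f2_C3.
    - apply (is_derive_opp (fun t => dy J t 0)), is_derive_dx, Jy_C1.
    - apply is_derive_dx, Jx_C1. }
  assert (F2y : a * dy (Fmap2 f1 f2) 0 0 = b ^ 2).
  { change (Fmap2 f1 f2) with (fun u v => dirder f2 u v (- dy J u v) (dx J u v)).
    rewrite (dy_dirder f2 _ _ 0 0 (- dy (dy J) 0 0) (dy (dx J) 0 0)).
    - unfold hessian_app, dirder; rewrite f2_dx0, f2_dy0, Jac_dx0.
      replace (b ^ 2) with (- b * - b) by ring; rewrite <- f2_dydx_origin; ring.
    - exact f2_C3.
    - apply (is_derive_opp (fun t => dy J 0 t)), is_derive_dy, Jy_C1.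
    - apply is_derive_dy, Jx_C1. }
  unfold detDF; rewrite F1x, F2x, <- F2y; ring.
Qed.

Lemma cusp_coefficient_neq0 : cusp_point f1 f2 0 0 -> K <> 0.
Proof.
  intros [_ (e & g1 & g2 & k1 & k2 & He & Hg1 & Hg2 & Hk1 & Hk2 & Hg10 & Hg20 & Hcurve & Hker & Hh)].
  cbv zeta in Hh; destruct Hh as [_ Hh].
  assert (H0 : Rabs 0 < e) by (rewrite Rabs_R0; exact He).
  assert (Hg2' : Derive g2 0 = 0).
  { destruct (proj1 (Hker 1 0)) as [c [Hc1 Hc2]].
    - unfold Dfapp; rewrite f1_dx0, f2_dx0, f2_dy0; f_equal; ring.
    - assert (c <> 0) by (intros ->; lra).
      apply (Rmult_eq_reg_l c); lra. }
  assert (Hrow : forall t, Rabs t < e -> dirder f1 (g1 t) (g2 t) (k1 t) (k2 t) = 0)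
    by (intros t Ht; destruct (Hcurve t Ht) as (_ & _ & _ & HDf); exact (f_equal fst HDf)).
  assert (Hk20 : k2 0 = 0).
  { specialize (Hrow 0 H0); unfold dirder in Hrow; rewrite Hg10, Hg20, f1_dx0 in Hrow.
    apply (Rmult_eq_reg_l a); lra. }
  assert (Hdiff : forall G, Ck 3 G ->
    Derive (fun t => dirder G (g1 t) (g2 t) (k1 t) (k2 t)) 0 =
    dx (dx G) 0 0 * Derive g1 0 * k1 0 + dirder G 0 0 (Derive k1 0) (Derive k2 0)).
  { intros G HG; apply is_derive_unique; eapply is_derive_eq.
    - apply is_derive_dirder; [exact HG | ..]; eapply smooth_on1_is_derive; eauto.
    - unfold hessian_app, dirder; rewrite Hg10, Hg20, Hg2', Hk20; simpl; ring. }
  assert (Hrow' : dx (dx f1) 0 0 * Derive g1 0 * k1 0 + a * Derive k2 0 = 0).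
  { pose proof (Derive_n_locally_zero _ 0 0
      (filter_imp _ _ Hrow (locally_Rabs_lt 0 e H0))) as H; simpl in H.
    rewrite Hdiff in H; [| apply Ck_S, f1_C4].
    unfold dirder in H; rewrite f1_dx0 in H; lra. }
  change (Derive (fun t => dirder J (g1 t) (g2 t) (k1 t) (k2 t)) 0 <> 0) in Hh.
  rewrite Hdiff in Hh; [| exact Jac_C3]; unfold dirder in Hh; rewrite Jac_dx0 in Hh.
  intros HK; apply Hh, (Rmult_eq_reg_l a); [| exact f1_dy0].
  transitivity (Derive g1 0 * k1 0 * K
                + b * (dx (dx f1) 0 0 * Derive g1 0 * k1 0 + a * Derive k2 0)).
  - unfold cusp_coefficient; simpl; ring.
  - rewrite HK, Hrow'; ring.
Qed.

Lemma graph_second_derivatives (phi : R -> R) (eps : R) :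
  0 < eps -> smooth_on1 phi eps -> phi 0 = 0 ->
  (forall t, Rabs t < eps -> J t (phi t) = 0) ->
  b * Derive_n (fun t => f1 t (phi t)) 2 0 = - K /\
  Derive_n (fun t => f2 t (phi t)) 2 0 = 0.
Proof.
  intros Heps Hphi Hphi0 Hlevel.
  assert (H0 : Rabs 0 < eps) by (rewrite Rabs_R0; exact Heps).
  assert (Hloc : locally 0 (fun t => J t (phi t) = 0))
    by exact (filter_imp _ _ Hlevel (locally_Rabs_lt 0 eps H0)).
  assert (Hphi1 : Derive phi 0 = 0).
  { pose proof (Derive_n_locally_zero (fun t => J t (phi t)) 0 0 Hloc) as H; simpl in H.
    rewrite (Derive_graph J phi eps 0) in H; [| apply (Ck_le 3), Jac_C3; auto | exact Hphi | exact H0].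
    unfold dirder in H; rewrite Hphi0, Jac_dx0 in H.
    apply (Rmult_eq_reg_l b); lra. }
  assert (Hphi2 : dx (dx J) 0 0 + b * Derive (Derive phi) 0 = 0).
  { pose proof (Derive_n_locally_zero (fun t => J t (phi t)) 1 0 Hloc) as H.
    rewrite (Derive2_graph J phi eps 0 Jac_C3 Hphi H0) in H.
    unfold hessian_app, dirder in H; rewrite Hphi0, Hphi1, Jac_dx0 in H; lra. }
  split.
  - rewrite (Derive2_graph f1 phi eps 0 (Ck_S _ _ f1_C4) Hphi H0).
    unfold hessian_app, dirder, cusp_coefficient; rewrite Hphi0, Hphi1, f1_dx0; nra.
  - rewrite (Derive2_graph f2 phi eps 0 (Ck_S _ _ f2_C4) Hphi H0).
    unfold hessian_app, dirder; rewrite Hphi0, Hphi1, f2_dx0, f2_dy0, f2_dxdx_origin; ring.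
Qed.

Lemma Dfapp_gradJ_origin : Dfapp f1 f2 0 0 (dx J 0 0) b = (a * b, 0).
Proof. unfold Dfapp; rewrite f1_dx0, f2_dx0, f2_dy0, Jac_dx0; f_equal; ring. Qed.

End Origin.

Theorem mainTheorem14 (f1 f2 : R -> R -> R) (phi : R -> R) (eps : R) :
  smooth2 f1 -> smooth2 f2 ->
  one_generic f1 f2 ->
  cusp_point f1 f2 0 0 ->
  f1 0 0 = 0 -> f2 0 0 = 0 ->
  dx f1 0 0 = 0 -> dx f2 0 0 = 0 -> dy f2 0 0 = 0 -> dy f1 0 0 <> 0 ->
  dx (Jac f1 f2) 0 0 = 0 -> dy (Jac f1 f2) 0 0 <> 0 ->
  0 < eps -> smooth_on1 phi eps -> phi 0 = 0 ->
  (forall t, Rabs t < eps -> Jac f1 f2 t (phi t) = 0) ->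
  let v1 := (Derive_n (fun t => f1 t (phi t)) 2 0,
             Derive_n (fun t => f2 t (phi t)) 2 0) in
  let v2 := Dfapp f1 f2 0 0 (dx (Jac f1 f2) 0 0) (dy (Jac f1 f2) 0 0) in
  detDF f1 f2 0 0 <> 0 /\
  v1 <> (0, 0) /\ v2 <> (0, 0) /\
  ((exists c, 0 < c /\ fst v1 = c * fst v2 /\ snd v1 = c * snd v2)
     <-> detDF f1 f2 0 0 < 0) /\
  ((exists c, c < 0 /\ fst v1 = c * fst v2 /\ snd v1 = c * snd v2)
     <-> detDF f1 f2 0 0 > 0).
Proof.
  intros Hf1 Hf2 _ Hcusp _ _ Hf1x Hf2x Hf2y Ha HJx Hb Heps Hphi Hphi0 Hlevel; cbv zeta.
  pose proof (Hf1 4%nat) as Hf1C4; pose proof (Hf2 4%nat) as Hf2C4.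
  pose proof (detDF_origin f1 f2 Hf1C4 Hf2C4 Hf1x Hf2x Hf2y Ha HJx) as Hdet.
  pose proof (cusp_coefficient_neq0 f1 f2 Hf1C4 Hf2C4 Hf1x Hf2x Hf2y Ha HJx Hcusp) as HK.
  destruct (graph_second_derivatives f1 f2 Hf1C4 Hf2C4 Hf1x Hf2x Hf2y Ha HJx Hb
              phi eps Heps Hphi Hphi0 Hlevel) as [Hv1 ->].
  rewrite (Dfapp_gradJ_origin f1 f2 Hf1x Hf2x Hf2y HJx); cbn [fst snd].
  apply horizontal_directions.
  set (x1 := Derive_n (fun t => f1 t (phi t)) 2 0) in *.
  set (K := cusp_coefficient f1 f2) in *.
  (* [x1 (a b) detDF = (b x1) (a detDF) = - K^2 b^2] *)
  replace (x1 * (dy f1 0 0 * dy (Jac f1 f2) 0 0) * detDF f1 f2 0 0)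
    with (dy (Jac f1 f2) 0 0 * x1 * (dy f1 0 0 * detDF f1 f2 0 0)) by ring.
  rewrite Hv1, Hdet.
  assert (0 < K * K) by (apply Rsqr_pos_lt, HK).
  assert (0 < dy (Jac f1 f2) 0 0 ^ 2) by (apply pow2_gt_0, Hb).
  nra.
Qed.
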